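(* Let $V$ be a set and $\mathcal{E}, \mathcal{F}$ families of subsets of $V$. Then $\langle V,\mathcal{E},\mathcal{F}\rangle$ has Property S if and only if $\langle V,[\mathcal{E}]_{\mathcal{F}},\mathcal{F}\rangle$ has Property S.
   Context: A transversal for a family is a set that intersects every member of the family. The triple $\langle V,\mathcal{E},\mathcal{F}\rangle$ has Property S if there exists $X \subseteq V$ such that $X$ is a transversal for $\mathcal{E}$ and $V\setminus X$ is a transversal for $\mathcal{F}$. Resolution: for subsets $c_1,\dots,c_n, d, e$ of $V$, $e$ follows from $c_1,\dots,c_n$ by resolution on $d$ if $d = \{v_1,\dots,v_n\}$ with $v_i \in c_i$ for $1\le i\le n$ and $e = \bigcup_{i=1}^n (c_i \setminus \{v_i\})$. For families $\mathcal{A}, \mathcal{D}$ of subsets of $V$, $[\mathcal{A}]_{\mathcal{D}}$ denotes the closure of $\mathcal{A}$ under resolution on members of $\mathcal{D}$: the smallest family containing $\mathcal{A}$ such that whenever $c_1,\dots,c_n$ are in the family and $e$ follows from $c_1,\dots,c_n$ by resolution on some $d \in \mathcal{D}$, then $e$ is in the family. *)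

From Stdlib Require Import Arith.

Section Defs.
Variable V : Type.

Definition transversal (X : V -> Prop) (fam : (V -> Prop) -> Prop) : Prop :=
  forall A, fam A -> exists x, X x /\ A x.

Definition propertyS (E F : (V -> Prop) -> Prop) : Prop :=
  exists X : V -> Prop, transversal X E /\ transversal (fun x => ~ X x) F.

(* e follows from c_1..c_n (here c 0 .. c (n-1)) by resolution on d,
   with the chosen elements v_i \in c_i, d = {v_1..v_n},
   e = \bigcup_i (c_i \ {v_i}) *)
Definition resolvent (n : nat) (c : nat -> V -> Prop) (v : nat -> V)
  (d e : V -> Prop) : Prop :=
  (forall i, i < n -> c i (v i)) /\
  (forall x, d x <-> exists i, i < n /\ v i = x) /\
  (forall x, e x <-> exists i, i < n /\ c i x /\ x <> v i).

Inductive res_closure (A D : (V -> Prop) -> Prop) : (V -> Prop) -> Prop :=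
| rc_base : forall a, A a -> res_closure A D a
| rc_res : forall (n : nat) (c : nat -> V -> Prop) (v : nat -> V) (d e : V -> Prop),
    (forall i, i < n -> res_closure A D (c i)) ->
    D d -> resolvent n c v d e -> res_closure A D e.

End Defs.

(* If X meets every clause of E and its complement meets every member d of F,
   then X meets every resolvent on d: some v_i in d lies outside X while X
   meets c_i, so X meets c_i at a point other than v_i.  Hence X stays a
   transversal of [E]_F, and the converse is immediate since E is contained
   in [E]_F. *)

Section Transversals.
Variable V : Type.
Implicit Types (X : V -> Prop) (A B D : (V -> Prop) -> Prop).

Lemma transversal_sub X A B :
  (forall a, A a -> B a) -> transversal V X B -> transversal V X A.
Proof. intros AB HB a Ha; exact (HB a (AB a Ha)). Qed.

Lemma transversal_resolvent X n c v d e :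
  (forall i, i < n -> exists x, X x /\ c i x) ->
  (exists x, ~ X x /\ d x) -> resolvent V n c v d e -> exists x, X x /\ e x.
Proof.
  intros Hc [x [nXx dx]] [_ [Hd He]].
  destruct (proj1 (Hd x) dx) as [i [Hi vi_x]].
  destruct (Hc i Hi) as [y [Xy ciy]].
  exists y; split; [exact Xy|].
  apply He; exists i; repeat split; [exact Hi | exact ciy |].
  intros ->; apply nXx; rewrite <- vi_x; exact Xy.
Qed.

Lemma transversal_res_closure X A D :
  transversal V X A -> transversal V (fun x => ~ X x) D ->
  transversal V X (res_closure V A D).
Proof.
  intros HA HD e He.
  induction He as [a Ha | n c v d e _ IH Dd Hres].
  - exact (HA a Ha).
  - exact (transversal_resolvent X n c v d e IH (HD d Dd) Hres).
Qed.

End Transversals.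

Theorem theorem7 (V : Type) (E F : (V -> Prop) -> Prop) :
  propertyS V E F <-> propertyS V (res_closure V E F) F.
Proof.
  split; intros [X [HE HF]]; exists X; split; try exact HF.
  - exact (transversal_res_closure V X E F HE HF).
  - exact (transversal_sub V X E (res_closure V E F) (rc_base V E F) HE).
Qed.
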